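(* Let $n\ge 2$ and let $G$ be a graph on $2n+1$ vertices with at least $n^2+n$ edges that contains no two distinct vertices of the same degree joined by a path of length three. Let $\beta$ be the largest integer such that $G$ contains two distinct vertices of degree $\beta$. Then $\beta\ge 3$.
   Context: A path of length three joining vertices $a$ and $b$ is a path $a\,x\,y\,b$ with four distinct vertices and three edges. Graphs are finite and simple. *)

From mathcomp Require Import all_boot.
Set Implicit Arguments. Unset Strict Implicit. Unset Printing Implicit Defensive.

Definition simple_graph (T : finType) (e : rel T) : Prop :=
  irreflexive e /\ symmetric e.

Definition edges (T : finType) (e : rel T) : {set {set T}} :=
  [set [set x; y] | x in T, y in T & e x y].

Definition deg (T : finType) (e : rel T) (x : T) : nat := #|[set y | e x y]|.

Definition path3 (T : finType) (e : rel T) (a b : T) : Prop :=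
  exists x y : T,
    uniq [:: a; x; y; b] /\ e a x /\ e x y /\ e y b.

Definition repeated_degree (T : finType) (e : rel T) (k : nat) : Prop :=
  exists u v : T, u != v /\ deg e u = k /\ deg e v = k.

From mathcomp Require Import all_boot zify.

Set Implicit Arguments.
Unset Strict Implicit.
Unset Printing Implicit Defensive.

(* If beta <= 2, all degrees >= 3 are distinct, so the degree sum, at least
   2n^2 + 2n by the edge bound, is at most a constant per vertex plus a sum
   of distinct values, i.e. a binomial coefficient.  Without a vertex v of
   degree 2n this already fails.  With one, two vertices a, b of equal degree
   have no neighbour outside {v, a, b}, since otherwise a x v b would be a
   path of length three; hence at most two vertices have degree 2, and if two
   do, they see only each other and v, which forbids degree 2n - 1.  In both
   cases the count again falls short of 2n^2 + 2n. *)

Lemma sum_uniq_leq_bin2 (s : seq nat) m :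
  uniq s -> (forall j, j \in s -> j < m) -> \sum_(j <- s) j <= 'C(m, 2).
Proof.
move=> s_uniq s_lt; rewrite -bin2_sum /index_iota subn0.
apply: uniq_sub_le_big => //; [move=> *; exact: leq_addr | exact: iota_uniq |].
by move=> j /s_lt; rewrite mem_iota.
Qed.

Lemma sum_inj_leq_bin2 (T : finType) (P : {pred T}) (g : T -> nat)
    (r : seq nat) m :
  uniq r -> {in P &, injective g} -> (forall j, j \in r -> j < m) ->
  (forall x, x \in P -> g x < m /\ g x \notin r) ->
  \sum_(j <- r) j + \sum_(x in P) g x <= 'C(m, 2).
Proof.
move=> r_uniq g_inj r_lt g_lt.
rewrite -(big_image _ _ g P (fun j => j)) -big_cat.
apply: sum_uniq_leq_bin2 => [|j]; last first.
  by rewrite mem_cat => /orP[/r_lt // | /imageP[x /g_lt[gx_lt _] ->]].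
rewrite cat_uniq r_uniq map_inj_in_uniq ?enum_uniq; last first.
  by move=> x y; rewrite !mem_enum; exact: g_inj.
by rewrite andbT; apply/hasPn => _ /imageP[x /g_lt[_ ?] ->].
Qed.

Lemma sum_leq_threshold (T : finType) (f : T -> nat) t :
  \sum_x f x <= t * #|T| + \sum_(x | t < f x) (f x - t).
Proof.
rewrite mulnC.
apply: leq_trans (_ : _ <= \sum_x (t + if t < f x then f x - t else 0)) _.
  by apply: leq_sum => x _; case: ltnP; lia.
by rewrite big_split /= sum_nat_const [in X in _ <= X]big_mkcond.
Qed.

Section SimpleGraph.

Variables (T : finType) (e : rel T).
Hypotheses (e_irr : irreflexive e) (e_sym : symmetric e).

Lemma nbhd_subsetC1 x : [set y | e x y] \subset [set~ x].
Proof.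
by apply/subsetP => y; rewrite !inE; apply: contraTneq => ->; rewrite e_irr.
Qed.

Lemma deg_ltn_card x : deg e x < #|T|.
Proof.
rewrite (leq_ltn_trans (subset_leq_card (nbhd_subsetC1 x))) // cardsC1.
by rewrite prednK //; apply/card_gt0P; exists x.
Qed.

Lemma handshake_leq : 2 * #|edges e| <= \sum_x deg e x.
Proof.
have card_edge E : E \in edges e -> #|E| = 2.
  case/imset2P => x y _; rewrite inE => exy ->.
  by rewrite cards2; case: eqVneq exy => [->|]; rewrite ?e_irr.
rewrite mulnC -sum_nat_const.
have -> : \sum_(E in edges e) 2 = \sum_(E in edges e) \sum_(x in E) 1.
  by apply: eq_bigr => E /card_edge <-; rewrite sum1_card.
rewrite (exchange_big_dep xpredT) //=; apply: leq_sum => x _.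
rewrite sum1_card.
apply: leq_trans (leq_imset_card (fun y => [set x; y]) [set y | e x y]).
apply/subset_leq_card/subsetP => E /andP[/imset2P[a b _]].
rewrite inE => eab -> /set2P[->|->].
  by apply/imsetP; exists b; rewrite ?inE.
by apply/imsetP; exists a; rewrite ?inE 1?e_sym // setUC.
Qed.

Let A := [set x | deg e x == 2].

Section FullVertex.

Variable v : T.
Hypotheses (v_full : deg e v = #|T|.-1) (card_gt4 : 4 < #|T|).
Hypothesis path3_free :
  forall a b, a != b -> deg e a = deg e b -> ~ path3 e a b.

Lemma full_adj y : y != v -> e v y.
Proof.
have nbhd_v : [set y | e v y] = [set~ v].
  by apply/eqP; rewrite eqEcard nbhd_subsetC1 cardsC1 -v_full /=.
by move=> yv; move: (in_setC1 y v); rewrite yv -nbhd_v inE.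
Qed.

Lemma twin_nbhd_sub a b :
  a != b -> a != v -> b != v -> deg e a = deg e b ->
  [set y | e a y] \subset [set v; b].
Proof.
move=> ab av bv dab; apply/subsetP => y; rewrite !inE => ay.
apply/negPn/negP => /norP[yv yb]; apply: (path3_free ab dab).
have ya : y != a by apply: contraTneq ay => ->; rewrite e_irr.
exists y, v; rewrite /= !inE !negb_or ab av yv yb (eq_sym a) ya (eq_sym v) bv.
by rewrite ay e_sym !full_adj.
Qed.

Lemma deg2_neq_full a : a \in A -> a != v.
Proof. by rewrite inE; apply: contraTneq => ->; rewrite v_full; lia. Qed.

Lemma deg2_nbhd a b :
  a \in A -> b \in A -> a != b -> [set y | e a y] = [set v; b].
Proof.
move=> Aa Ab ab.
have [da db] : deg e a = 2 /\ deg e b = 2.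
  by move: Aa Ab; rewrite !inE => /eqP-> /eqP->.
apply/eqP; rewrite eqEcard twin_nbhd_sub ?deg2_neq_full ?da ?db //=.
by rewrite cards2 eq_sym deg2_neq_full // -/(deg e a) da.
Qed.

Lemma card_deg2_leq2 : #|A| <= 2.
Proof.
have [->|[a Aa]] := set_0Vmem A; first by rewrite cards0.
rewrite (cardsD1 a) Aa add1n ltnS.
have sub : A :\ a \subset [set y | e a y] :\ v.
  apply/subsetP => b; rewrite in_setD1 => /andP[ba Ab].
  by rewrite in_setD1 deg2_neq_full //= (deg2_nbhd Aa Ab) 1?eq_sym // set22.
apply: leq_trans (subset_leq_card sub) _.
have av : e a v by rewrite e_sym full_adj ?deg2_neq_full.
move: (cardsD1 v [set y | e a y]) Aa; rewrite !inE av -/(deg e a) => ->.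
by rewrite add1n eqSS => /eqP->.
Qed.

Lemma deg2_nbhd_sub a : a \in A -> 1 < #|A| -> [set y | e a y] \subset v |: A.
Proof.
move=> Aa; rewrite (cardsD1 a) Aa ltnS card_gt0 => /set0Pn[b].
rewrite in_setD1 => /andP[ba Ab]; rewrite (deg2_nbhd Aa Ab) 1?eq_sym //.
by apply/subsetP => y /set2P[->|->]; rewrite in_setU1 ?eqxx ?Ab ?orbT.
Qed.

Lemma deg_neq_card_sub2 w : #|A| = 2 -> deg e w != #|T| - 2.
Proof.
move=> A2; apply/eqP => dw.
have wv : w != v by apply/eqP => wv; move: dw; rewrite wv v_full; lia.
have wA : w \notin A by rewrite inE dw; lia.
have sub : [set y | e w y] \subset [set~ w] :\: A.
  apply/subsetP => y; rewrite inE in_setD in_setC1 => wy; apply/andP; split.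
    apply: contraNN wA => Ay; have := subsetP (deg2_nbhd_sub Ay _) w.
    by rewrite A2 inE e_sym wy in_setU1 (negbTE wv) => /(_ isT isT).
  by apply: contraTneq wy => ->; rewrite e_irr.
have AC1 : A \subset [set~ w].
  by apply/subsetP => a Aa; rewrite !inE; apply: contraNneq wA => <-.
move: (subset_leq_card sub); rewrite cardsD (setIidPr AC1) cardsC1 A2.
by rewrite -/(deg e w) dw; lia.
Qed.

End FullVertex.

Section DegreeSums.

Hypothesis deg_inj : {in [pred x | 2 < deg e x] &, injective (deg e)}.

Lemma deg_inj_gt1 (B : {set T}) :
  #|A :&: B| <= 1 ->
  {in B &, forall x y, 1 < deg e x -> deg e x = deg e y -> x = y}.
Proof.
move=> AB_le1 x y Bx By x_gt1 dxy.
have [x_gt2 | x_le2] := ltnP 2 (deg e x).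
  by apply: deg_inj; rewrite ?inE -?dxy.
by apply: (card_le1_eqP AB_le1); rewrite in_setI ?Bx ?By inE -?dxy andbT; lia.
Qed.

Lemma sum_deg_no_full :
  (forall x, deg e x != #|T|.-1) ->
  \sum_x deg e x <= 2 * #|T| + 'C(#|T| - 3, 2).
Proof.
move=> no_full; apply: leq_trans (sum_leq_threshold _ 2) _; rewrite leq_add2l.
have := @sum_inj_leq_bin2 _ [pred x | 2 < deg e x] (fun x => deg e x - 2)
  [::] (#|T| - 3).
rewrite big_nil add0n.
apply=> // [x y /[!inE] x_gt2 y_gt2 dxy | x /[!inE] x_gt2].
  by apply: deg_inj; rewrite ?inE //; lia.
by split=> //; have := deg_ltn_card x; have := no_full x; lia.
Qed.

Lemma sum_deg_deg2_leq1 :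
  #|A| <= 1 -> \sum_x deg e x <= #|T| + 'C(#|T|.-1, 2).
Proof.
move=> A_le1; apply: leq_trans (sum_leq_threshold _ 1) _.
rewrite mul1n leq_add2l.
have := @sum_inj_leq_bin2 _ [pred x | 1 < deg e x] (fun x => deg e x - 1)
  [::] #|T|.-1.
rewrite big_nil add0n.
apply=> // [x y /[!inE] x_gt1 y_gt1 dxy | x /[!inE] x_gt1].
  by apply: (deg_inj_gt1 (B := setT)); rewrite ?setIT ?inE //; lia.
by split=> //; have := deg_ltn_card x; lia.
Qed.

Lemma sum_deg_deg2_pair :
  #|A| = 2 -> (forall x, deg e x != #|T| - 2) ->
  \sum_x deg e x + (#|T| - 3) <= #|T|.+1 + 'C(#|T|.-1, 2).
Proof.
move=> A2 no_deg; have /cards2P[a [b [_ defA]]] : #|A| == 2 by rewrite A2.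
have Ab : b \in A by rewrite defA set22.
have db : deg e b = 2 by move: Ab; rewrite inE => /eqP.
have card_ge2 : 2 <= #|T| by rewrite -A2 max_card.
have A_b : #|A :&: [set~ b]| <= 1.
  by rewrite -setDE; move: (cardsD1 b A); rewrite Ab A2; lia.
have sum_le := sum_leq_threshold (deg e) 1.
(* [/=] also unfolds the coercions inside [#|T|], hiding it from [lia]. *)
rewrite [X in _ <= _ + X](bigD1 b) ?db //= -/#|T| in sum_le.
suff : \sum_(j <- [:: #|T| - 3]) j +
    \sum_(x | (1 < deg e x) && (x != b)) (deg e x - 1) <= 'C(#|T|.-1, 2).
  by rewrite big_cons big_nil addn0; lia.
apply: sum_inj_leq_bin2 => // [x y | j | x].
- move=> /[!unfold_in] /andP[x_gt1 xb] /andP[y_gt1 yb] dxy.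
  by apply: (deg_inj_gt1 A_b); rewrite ?inE //; lia.
- by rewrite inE => /eqP->; lia.
rewrite unfold_in inE => /andP[x_gt1 _].
by have := deg_ltn_card x; have := no_deg x; lia.
Qed.

End DegreeSums.

End SimpleGraph.

Theorem lemma2p4 (n : nat) (T : finType) (e : rel T) (beta : nat) :
  2 <= n ->
  simple_graph e ->
  #|T| = 2 * n + 1 ->
  n ^ 2 + n <= #|edges e| ->
  (forall a b : T, a != b -> deg e a = deg e b -> ~ path3 e a b) ->
  repeated_degree e beta ->
  (forall k, repeated_degree e k -> k <= beta) ->
  3 <= beta.
Proof.
move=> n_ge2 [e_irr e_sym] cardT edges_ge path3_free _ beta_max.
rewrite leqNgt; apply/negP => beta_lt3.
have deg_inj : {in [pred x | 2 < deg e x] &, injective (deg e)}.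
  move=> x y /[!inE] x_gt2 _ dxy; have [//|xy] := eqVneq x y.
  suff : deg e x <= beta by lia.
  by apply: beta_max; exists x, y.
have deg_sum : 2 * (n ^ 2 + n) <= \sum_x deg e x.
  apply: leq_trans (handshake_leq e_irr e_sym).
  by rewrite leq_mul2l edges_ge orbT.
have [v v_full] : exists v, deg e v = #|T|.-1.
  case: (pickP (fun x => deg e x == #|T|.-1)) => [v /eqP | no_full].
    by exists v.
  have := sum_deg_no_full e_irr deg_inj (fun x => negbT (no_full x)).
  by rewrite cardT bin2; nia.
have card_gt4 : 4 < #|T| by rewrite cardT; lia.
have A_le2 := card_deg2_leq2 e_irr e_sym v_full card_gt4 path3_free.
have [A_le1 | A_gt1] := leqP #|[set x | deg e x == 2]| 1.
  by have := sum_deg_deg2_leq1 e_irr deg_inj A_le1; rewrite cardT bin2; nia.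
have A2 : #|[set x | deg e x == 2]| = 2 by lia.
have := deg_neq_card_sub2 e_irr e_sym v_full card_gt4 path3_free _ A2.
move=> /(sum_deg_deg2_pair e_irr deg_inj A2).
by rewrite cardT bin2; nia.
Qed.
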